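(* Let $\mathcal L$ be a non-trivial geometric lattice, let $(\mathcal E_1,\iota_1)$ and $(\mathcal E_2,\iota_2)$ be modular extensions of $\mathcal L$, and let $F$ be a flat of $\mathcal E_1$ with $F\ge F_{\iota_1}$. If $F$ is modular in $\mathcal E_1$, then $(F,\hat1_{\mathcal E_2})$ is a modular flat of the pushout $\mathcal E_1\cup_{\mathcal L}\mathcal E_2$.
   Context: A geometric lattice is a finite lattice (bottom $\hat0$, top $\hat1$, join $\vee$, meet $\wedge$) which is ranked (rank function $\mathrm{rk}$), atomic and semimodular ($\mathrm{rk}(F_1\wedge F_2)+\mathrm{rk}(F_1\vee F_2)\le\mathrm{rk}(F_1)+\mathrm{rk}(F_2)$); its elements are called flats, and it is non-trivial if it has at least two elements. A flat $F$ is modular if $\mathrm{rk}(F\wedge F')+\mathrm{rk}(F\vee F')=\mathrm{rk}(F)+\mathrm{rk}(F')$ for every flat $F'$. An embedding of geometric lattices is an injective order-preserving map preserving joins and sending atoms to atoms. A modular extension of $\mathcal L$ is a pair $(\mathcal E,\iota)$ with $\mathcal E$ a geometric lattice and $\iota:\mathcal L\to\mathcal E$ an embedding whose image is an interval $[\hat0,F_\iota]$ with $F_\iota$ modular in $\mathcal E$. The pushout $\mathcal E_1\cup_{\mathcal L}\mathcal E_2$ of two modular extensions is the subposet of $\mathcal E_1\times\mathcal E_2$ consisting of the pairs $(F_1,F_2)$ with $\iota_1^{-1}(F_1\wedge F_{\iota_1})=\iota_2^{-1}(F_2\wedge F_{\iota_2})$; it is a geometric lattice with rank $\mathrm{rk}(F_1,F_2)=\mathrm{rk}_{\mathcal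 E_1}(F_1)+\mathrm{rk}_{\mathcal E_2}(F_2)-\mathrm{rk}_{\mathcal L}(\iota_1^{-1}(F_1\wedge F_{\iota_1}))$. *)

From HB Require Import structures.
From mathcomp Require Import all_boot all_order.
Set Implicit Arguments. Unset Strict Implicit. Unset Printing Implicit Defensive.
Import Order.Theory.
Local Open Scope order_scope.

Section Geometric.
Context {d : Order.disp_t} {T : finTBLatticeType d}.

Definition covers (x y : T) : bool :=
  (x < y) && [forall z : T, ~~ ((x < z) && (z < y))].

Definition is_atom (a : T) : bool := covers \bot a.

Definition ranked (rk : T -> nat) : Prop :=
  rk \bot = 0%N /\ forall x y : T, covers x y -> rk y = (rk x).+1.

Definition atomic : Prop :=
  forall x : T, x = \join_(a : T | is_atom a && (a <= x)) a.

Definition semimodular (rk : T -> nat) : Prop :=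
  forall x y : T, (rk (x `&` y) + rk (x `|` y) <= rk x + rk y)%N.

Definition geometric (rk : T -> nat) : Prop :=
  ranked rk /\ atomic /\ semimodular rk.

Definition nontrivial : Prop := (\bot : T) != \top.

Definition modular_flat (rk : T -> nat) (F : T) : Prop :=
  forall F' : T, (rk (F `&` F') + rk (F `|` F') = rk F + rk F')%N.

End Geometric.

Section Ext.
Context {dL : Order.disp_t} {L : finTBLatticeType dL}
        {dE : Order.disp_t} {E : finTBLatticeType dE}.

Definition embedding (iota : L -> E) : Prop :=
  injective iota /\
  (forall x y : L, x <= y -> iota x <= iota y) /\
  (forall x y : L, iota (x `|` y) = iota x `|` iota y) /\
  (forall a : L, is_atom a -> is_atom (iota a)).

Definition modular_extension (rkE : E -> nat) (iota : L -> E) (Fi : E) : Prop :=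
  geometric rkE /\ embedding iota /\
  (forall y : E, (exists x : L, iota x = y) <-> (\bot <= y) && (y <= Fi)) /\
  modular_flat rkE Fi.

End Ext.

Section Pushout.
Context {dL : Order.disp_t} {L : finTBLatticeType dL}
        {d1 : Order.disp_t} {E1 : finTBLatticeType d1}
        {d2 : Order.disp_t} {E2 : finTBLatticeType d2}.
Variables (rkL : L -> nat) (rk1 : E1 -> nat) (rk2 : E2 -> nat).
Variables (iota1 : L -> E1) (Fi1 : E1) (iota2 : L -> E2) (Fi2 : E2).

(* membership in the pushout E1 u_L E2 (a subposet of E1 x E2):
   iota1^-1(F1 /\ Fi1) = iota2^-1(F2 /\ Fi2) *)
Definition po_mem (p : E1 * E2) : Prop :=
  exists X : L, iota1 X = p.1 `&` Fi1 /\ iota2 X = p.2 `&` Fi2.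

Definition po_le (p q : E1 * E2) : bool := (p.1 <= q.1) && (p.2 <= q.2).

Definition po_preim (p : E1 * E2) : L :=
  odflt \bot [pick X : L | iota1 X == p.1 `&` Fi1].

Definition po_rk (p : E1 * E2) : nat :=
  (rk1 p.1 + rk2 p.2 - rkL (po_preim p))%N.

Definition po_is_meet (p q m : E1 * E2) : Prop :=
  po_mem m /\ po_le m p /\ po_le m q /\
  forall z, po_mem z -> po_le z p -> po_le z q -> po_le z m.

Definition po_is_join (p q j : E1 * E2) : Prop :=
  po_mem j /\ po_le p j /\ po_le q j /\
  forall z, po_mem z -> po_le p z -> po_le q z -> po_le j z.

Definition po_modular (P : E1 * E2) : Prop :=
  po_mem P /\
  forall G, po_mem G -> exists M J, po_is_meet P G M /\ po_is_join P G J /\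
     (po_rk M + po_rk J = po_rk P + po_rk G)%N.

End Pushout.

(** For a flat [G = (G1, G2)] of the pushout, with [X] the common preimage of
    [G1 /\ Fi1] and [G2 /\ Fi2], the meet with [(F, 1)] is [(F /\ G1, G2)] and the
    join is [(F \/ G1, 1)]; both lie in the pushout because [Fi1 <= F].  Their
    pushout ranks are
      [rk1 (F /\ G1) + rk2 G2 - rkL X]  and  [rk1 (F \/ G1) + rk2 1 - rkL 1],
    so modularity of [F] in [E1] gives the modular equation, provided the
    truncated subtractions are exact.  This holds because an embedding of
    ranked lattices does not decrease rank: [rkL X <= rk2 (iota2 X) <= rk2 G2]. *)
From mathcomp Require Import all_boot all_order.
From mathcomp Require Import zify.
Import Order.Theory.
Local Open Scope order_scope.

Section Ranked.
Context {d : Order.disp_t} {T : finTBLatticeType d}.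
Implicit Types x y z : T.

Definition itv_oc x y := [pred w : T | (x < w) && (w <= y)].

Lemma itv_oc_properl x y z : x < z -> z <= y -> itv_oc z y \proper itv_oc x y.
Proof.
move=> xz zy; apply/properP; split.
  by apply/subsetP=> w; rewrite !inE => /andP[zw ->]; rewrite (lt_trans xz zw).
by exists z; rewrite !inE ?xz ?zy ?ltxx.
Qed.

Lemma itv_oc_properr x y z : x < z -> y < z -> itv_oc x y \proper itv_oc x z.
Proof.
move=> xz yz; apply/properP; split.
  by apply/subsetP=> w; rewrite !inE => /andP[-> wy]; rewrite (le_trans wy (ltW yz)).
by exists z; rewrite !inE ?xz ?lexx //= (lt_geF yz).
Qed.

(* Induction along maximal chains: a minimal element above [x] covers [x]. *)
Lemma covers_ind (P : T -> T -> Prop) :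
  (forall x, P x x) ->
  (forall x z y, covers x z -> z <= y -> P z y -> P x y) ->
  forall x y, x <= y -> P x y.
Proof.
move=> Prefl Pstep.
suff IH n x y : (#|itv_oc x y| <= n)%N -> x <= y -> P x y by move=> x y; apply: IH.
elim: n x y => [|n IHn] x y card_xy; rewrite le_eqVlt => /orP[/eqP<- | xy];
  first exact: Prefl.
- by move: card_xy; rewrite leqn0 => /eqP/card0_eq/(_ y); rewrite inE xy lexx.
- exact: Prefl.
have y_itv : y \in itv_oc x y by rewrite inE xy lexx.
case: (arg_minnP (fun z => #|itv_oc x z|) y_itv) => z /andP[xz zy] zmin.
have cov_xz : covers x z.
  rewrite /covers xz; apply/forallP=> w; apply/negP=> /andP[xw wz].
  have w_itv : w \in itv_oc x y by rewrite inE xw (le_trans (ltW wz) zy).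
  by have := zmin w w_itv; rewrite leqNgt proper_card // itv_oc_properr.
apply: (Pstep _ _ _ cov_xz zy (IHn _ _ _ zy)).
by rewrite -ltnS (leq_trans _ card_xy) // proper_card // itv_oc_properl.
Qed.

Context {rk : T -> nat}.
Hypothesis rk_ranked : ranked rk.

Lemma ranked_rank_gap {x y} : x <= y -> (rk x + (x != y) <= rk y)%N.
Proof.
move: x y; apply: covers_ind => [x | x z y cov_xz zy gap_zy].
  by rewrite eqxx addn0.
have rk_z := proj2 rk_ranked _ _ cov_xz.
by case: (x != y); case: (z != y) gap_zy; lia.
Qed.

Lemma ranked_le_homo : {homo rk : x y / x <= y >-> (x <= y)%N}.
Proof. by move=> x y /ranked_rank_gap; apply: leq_trans; rewrite leq_addr. Qed.

Lemma ranked_lt_homo : {homo rk : x y / x < y >-> (x < y)%N}.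
Proof. by move=> x y xy; have := ranked_rank_gap (ltW xy); rewrite (lt_eqF xy) addn1. Qed.

End Ranked.

Section Embedding.
Context {dL : Order.disp_t} {L : finTBLatticeType dL}
        {dE : Order.disp_t} {E : finTBLatticeType dE}.
Context {rkL : L -> nat} {rkE : E -> nat} {iota : L -> E}.

Lemma embedding_lt_homo : embedding iota -> {homo iota : x y / x < y}.
Proof.
move=> [iota_inj [iota_le _]] x y; rewrite !lt_neqAle => /andP[xy /iota_le ->].
by rewrite (inj_eq iota_inj) xy.
Qed.

(* Along a maximal chain below [y], each of the [rkL y] steps raises [rkE \o iota]. *)
Lemma ranked_lt_homo_rank_le :
  ranked rkL -> ranked rkE -> {homo iota : x y / x < y} ->
  forall y, (rkL y <= rkE (iota y))%N.
Proof.
move=> rL rE iota_lt.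
suff inc x y : x <= y -> (rkL y + rkE (iota x) <= rkL x + rkE (iota y))%N.
  by move=> y; have := inc _ y (le0x y); rewrite (proj1 rL); lia.
move: x y; apply: covers_ind => [x | x z y cov_xz zy inc_zy]; first lia.
have rk_z := proj2 rL _ _ cov_xz.
have := ranked_lt_homo rE _ _ (iota_lt _ _ (proj1 (andP cov_xz))); lia.
Qed.

Lemma modular_extension_top {Fi} : modular_extension rkE iota Fi -> iota \top = Fi.
Proof.
move=> [_ [[_ [iota_le _]] [iota_img _]]].
have [x iota_x] : exists x, iota x = Fi by apply/iota_img; rewrite le0x lexx.
apply/le_anti/andP; split; last by rewrite -iota_x iota_le ?lex1.
by have /iota_img/andP[] : exists x, iota x = iota \top by exists \top.
Qed.

End Embedding.

Section PushoutAboveFi1.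
Context {dL : Order.disp_t} {L : finTBLatticeType dL}
        {d1 : Order.disp_t} {E1 : finTBLatticeType d1}
        {d2 : Order.disp_t} {E2 : finTBLatticeType d2}.
Variables (rkL : L -> nat) (rk1 : E1 -> nat) (rk2 : E2 -> nat).
Variables (iota1 : L -> E1) (Fi1 : E1) (iota2 : L -> E2) (Fi2 : E2).
Hypotheses (iota1_top : iota1 \top = Fi1) (iota2_top : iota2 \top = Fi2).
Variable F : E1.
Hypothesis Fi1_le_F : Fi1 <= F.
Hypothesis iota1_inj : injective iota1.

Local Notation po_mem := (po_mem iota1 Fi1 iota2 Fi2).
Local Notation po_rk := (po_rk rkL rk1 rk2 iota1 Fi1).

Lemma po_mem_above (F' : E1) : Fi1 <= F' -> po_mem (F', \top).
Proof. by move=> /meet_idPr FFi; exists \top; rewrite /= FFi meet1x. Qed.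

Lemma po_is_meet_above G : po_mem G ->
  po_is_meet iota1 Fi1 iota2 Fi2 (F, \top) G (F `&` G.1, G.2).
Proof.
case: G => G1 G2 [X /= [iota1_X iota2_X]]; split.
  by exists X; rewrite /= meetAC (meet_idPr Fi1_le_F) meetC.
rewrite /po_le /= leIl leIr lex1 lexx; do 2!split=> //; move=> -[z1 z2] _.
by rewrite /po_le /= lexI => /andP[-> _] /andP[-> ->].
Qed.

Lemma po_is_join_above G :
  po_is_join iota1 Fi1 iota2 Fi2 (F, \top) G (F `|` G.1, \top).
Proof.
case: G => G1 G2; split; first by apply: po_mem_above; rewrite (le_trans Fi1_le_F) ?leUl.
rewrite /po_le /= leUl leUr !lex1; do 2!split=> //; move=> -[z1 z2] _.
by rewrite /po_le /= leUx => /andP[-> ->] /andP[-> _].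
Qed.

Lemma po_preimE {p : E1 * E2} {X} : iota1 X = p.1 `&` Fi1 -> po_preim iota1 Fi1 p = X.
Proof.
move=> iota1_X; rewrite /po_preim; case: pickP => [Y /eqP iota1_Y | none].
  by apply: iota1_inj; rewrite iota1_Y iota1_X.
by have := none X; rewrite iota1_X eqxx.
Qed.

Lemma po_preim_above (F' : E1) : Fi1 <= F' -> po_preim iota1 Fi1 (F', \top : E2) = \top.
Proof. by move=> /meet_idPr FFi; apply: po_preimE; rewrite /= FFi. Qed.

Lemma po_rk_modular_above G :
  ranked rkL -> ranked rk2 -> {homo iota2 : x y / x < y} ->
  modular_flat rk1 F -> po_mem G ->
  (po_rk (F `&` G.1, G.2) + po_rk (F `|` G.1, \top) = po_rk (F, \top) + po_rk G)%N.
Proof.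
move=> rL r2 iota2_lt modF; case: G => G1 G2 [X /= [iota1_X iota2_X]].
have Fi1_le_FG1 : Fi1 <= F `|` G1 by rewrite (le_trans Fi1_le_F) ?leUl.
rewrite /po_rk /= (@po_preimE (G1, G2) X iota1_X).
rewrite (@po_preimE (F `&` G1, G2) X) //=; last first.
  by rewrite meetAC (meet_idPr Fi1_le_F) meetC.
rewrite !po_preim_above //.
have rkX_le := ranked_lt_homo_rank_le rL r2 iota2_lt X.
have rk_top_le := ranked_lt_homo_rank_le rL r2 iota2_lt \top.
have rk_meet_le := ranked_le_homo r2 _ _ (leIl G2 Fi2).
have rk_Fi2_le := ranked_le_homo r2 _ _ (lex1 Fi2).
move: (modF G1) rkX_le rk_top_le; rewrite iota2_X iota2_top; lia.
Qed.

End PushoutAboveFi1.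

Theorem lemma4
  (dL : Order.disp_t) (L : finTBLatticeType dL) (rkL : L -> nat)
  (d1 : Order.disp_t) (E1 : finTBLatticeType d1) (rk1 : E1 -> nat)
  (d2 : Order.disp_t) (E2 : finTBLatticeType d2) (rk2 : E2 -> nat)
  (iota1 : L -> E1) (Fi1 : E1) (iota2 : L -> E2) (Fi2 : E2)
  (F : E1) :
  geometric rkL -> nontrivial (T := L) ->
  modular_extension rk1 iota1 Fi1 ->
  modular_extension rk2 iota2 Fi2 ->
  Fi1 <= F ->
  modular_flat rk1 F ->
  po_modular rkL rk1 rk2 iota1 Fi1 iota2 Fi2 (F, \top).
Proof.
move=> [rL _] _ ME1 ME2 Fi1_le_F modF.
have iota1_top := modular_extension_top ME1.
have iota2_top := modular_extension_top ME2.
have [_ [[iota1_inj _] _]] := ME1.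
have [[r2 _] [emb2 _]] := ME2.
split; first exact: po_mem_above.
move=> G memG; exists (F `&` G.1, G.2), (F `|` G.1, \top); split; last split.
- exact: po_is_meet_above.
- exact: po_is_join_above.
- exact: po_rk_modular_above rL r2 (embedding_lt_homo emb2) modF memG.
Qed.
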